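(* Let $\psi,\phi\in C[1,\infty)\cap C^2(1,\infty)$ satisfy: (a) $\phi$ is strictly increasing and $\phi(1)=0$; (b) $\psi$ is bounded, $\psi(1)=0$, $\psi\ge0$ and $\psi$ is not identically $0$; (c) $\lim_{\mu\to\infty}\psi(\mu)/\phi(\mu)=0$. Define, for $z\ge0$, $$\Psi(z)=\sup_{F\in\mathcal F}\Big\{\int\psi(\mu)\,dF(\mu):\int\phi(\mu)\,dF(\mu)\le z\Big\}.$$ Suppose $\lim_{\mu\to1+}\psi(\mu)/\phi(\mu)$ exists and is strictly smaller than $\Psi^*=\sup_{\mu>1}\psi(\mu)/\phi(\mu)$, and set $\mu^*=\max\{\mu>1:\psi(\mu)/\phi(\mu)=\Psi^*\}$. Then for every $0\le z\le\phi(\mu^* )$, $\Psi(z)=\Psi^*\cdot z$, and this value is attained by the mixture of point masses at $1$ and $\mu^*$ with masses $1-\varepsilon(z)$ and $\varepsilon(z)$, respectively, where $\varepsilon(z)=z/\phi(\mu^* )$.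
   Context: $\mathcal F$ denotes the set of all probability distributions $F$ on $[1,\infty)$. *)

From HB Require Import structures.
From mathcomp Require Import all_boot all_order all_algebra.
From mathcomp Require Import all_classical all_reals all_analysis.
Set Implicit Arguments. Unset Strict Implicit. Unset Printing Implicit Defensive.
Import Order.TTheory GRing.Theory Num.Theory.
Import numFieldNormedType.Exports.
Local Open Scope classical_set_scope.
Local Open Scope ring_scope.

Definition in_calF (R : realType) (F : probability R R) : Prop :=
  F `[1, +oo[%classic = 1%E.

Definition C2_open1 (R : realType) (f : R -> R) : Prop :=
  forall x : R, 1 < x ->
    derivable f x 1 /\ derivable (derive1 f) x 1 /\ {for x, continuous (derive1 (derive1 f))}.

Definition Psi (R : realType) (psi phi : R -> R) (z : R) : \bar R :=
  ereal_sup [set r : \bar R | exists F : probability R R,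
    [/\ in_calF F,
        (\int[F]_(x in `[1%R, +oo[%classic) (phi x)%:E <= z%:E)%E &
        (r = \int[F]_(x in `[1%R, +oo[%classic) (psi x)%:E)%E]].

Definition Psistar (R : realType) (psi phi : R -> R) : \bar R :=
  ereal_sup [set (psi mu / phi mu)%:E | mu in `]1, +oo[].

(* The ratio psi/phi is maximal at mu*, so psi <= Psi^* phi on [1, +oo) and
   integrating gives int psi dF <= Psi^* int phi dF <= Psi^* z for every
   admissible F.  The mixture of the point masses at 1 and mu* with weights
   1 - z / phi mu* and z / phi mu* has int phi = z and, since psi 1 = phi 1 = 0,
   int psi = Psi^* z, so the bound is attained.  The regularity and limit
   hypotheses only serve to guarantee that such a mu* exists. *)

From HB Require Import structures.
From mathcomp Require Import all_boot all_order all_algebra.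
From mathcomp Require Import all_classical all_reals all_analysis.
From mathcomp Require Import measurable_realfun.
Set Implicit Arguments. Unset Strict Implicit. Unset Printing Implicit Defensive.
Import Order.TTheory GRing.Theory Num.Theory.
Import numFieldNormedType.Exports.
Local Open Scope classical_set_scope.
Local Open Scope ring_scope.

Section dirac_mix.
Context d (T : measurableType d) (R : realType) (p : {i01 R}) (a b : T).

Definition dirac_mix (A : set T) : \bar R :=
  ((1 - p%:num)%:E * \d_a A + p%:num%:E * \d_b A)%E.

Lemma dirac_mixE :
  dirac_mix = measure_add (mscale (1 - p%:num)%:nng \d_a) (mscale p%:num%:nng \d_b).
Proof. by apply/funext => A; rewrite measure_addE. Qed.

Let dirac_mix0 : dirac_mix set0 = 0%E.
Proof. by rewrite /dirac_mix !measure0 !mule0 adde0. Qed.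

Let dirac_mix_ge0 A : (0 <= dirac_mix A)%E.
Proof. by rewrite /dirac_mix adde_ge0 // mule_ge0 // lee_fin. Qed.

Let dirac_mix_sigma_additive : semi_sigma_additive dirac_mix.
Proof. by rewrite dirac_mixE; exact: measure_semi_sigma_additive. Qed.

HB.instance Definition _ := isMeasure.Build _ _ _ dirac_mix
  dirac_mix0 dirac_mix_ge0 dirac_mix_sigma_additive.

Let dirac_mixT : dirac_mix [set: T] = 1%E.
Proof. by rewrite /dirac_mix !diracT !mule1 -EFinD subrK. Qed.

HB.instance Definition _ := Measure_isProbability.Build _ _ _ dirac_mix dirac_mixT.

Lemma dirac_mix_eq1 (D : set T) : D a -> D b -> dirac_mix D = 1%E.
Proof.
by move=> Da Db; rewrite /dirac_mix !diracE !mem_set // !mule1 -EFinD subrK.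
Qed.

Lemma ge0_integral_dirac_mix (D : set T) (f : T -> \bar R) :
  measurable D -> D a -> D b -> measurable_fun D f ->
  (forall x, D x -> 0 <= f x)%E ->
  (\int[dirac_mix]_(x in D) f x = (1 - p%:num)%:E * f a + p%:num%:E * f b)%E.
Proof.
move=> mD Da Db mf f0; rewrite dirac_mixE ge0_integral_measure_add //.
by rewrite !ge0_integral_mscale //= !integral_dirac // !diracE !mem_set // !mul1e.
Qed.

End dirac_mix.

Lemma ge0_integral_le_linear_bound d (T : measurableType d) (R : realType)
    (m : {measure set T -> \bar R}) (D : set T) (f g : T -> R) (c : R) :
  measurable D -> measurable_fun D f -> measurable_fun D g -> 0 <= c ->
  (forall x, D x -> 0 <= f x) -> (forall x, D x -> 0 <= g x) ->
  (forall x, D x -> f x <= c * g x) ->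
  (\int[m]_(x in D) (f x)%:E <= c%:E * \int[m]_(x in D) (g x)%:E)%E.
Proof.
move=> mD mf mg c0 f0 g0 fg.
rewrite -ge0_integralZl_EFin //; last exact/measurable_EFinP.
apply: ge0_le_integral => //; first exact/measurable_EFinP.
by apply: measurable_funeM; exact/measurable_EFinP.
Qed.

Section Psi_linear.
Variables (R : realType) (psi phi : R -> R).
Hypothesis psi_cont : {within `[1, +oo[, continuous psi}.
Hypothesis phi_cont : {within `[1, +oo[, continuous phi}.
Hypothesis phi_incr : {in `[1, +oo[ &, {homo phi : x y / x < y}}.
Hypothesis phi1 : phi 1 = 0.
Hypothesis psi1 : psi 1 = 0.
Hypothesis psi_ge0 : forall x, 1 <= x -> 0 <= psi x.
Variable mu : R.
Hypothesis mu_gt1 : 1 < mu.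
Hypothesis mu_attains : (psi mu / phi mu)%:E = Psistar psi phi.

Local Notation I := (`[1%R, +oo[%classic : set R).

Let I_ge1 x : I x -> 1 <= x.
Proof. by rewrite /= in_itv /= andbT. Qed.

Lemma phi_gt0 x : 1 < x -> 0 < phi x.
Proof.
by move=> x1; rewrite -phi1 phi_incr // in_itv /= ?lexx // andbT ltW.
Qed.

Lemma phi_ge0 x : 1 <= x -> 0 <= phi x.
Proof.
by rewrite le_eqVlt => /predU1P[<-|/phi_gt0/ltW//]; rewrite phi1.
Qed.

Lemma ratio_mu_ge0 : 0 <= psi mu / phi mu.
Proof. by rewrite divr_ge0 ?phi_ge0 ?psi_ge0 // ltW. Qed.

Lemma psi_le_ratio_phi x : 1 <= x -> psi x <= psi mu / phi mu * phi x.
Proof.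
rewrite le_eqVlt => /predU1P[<-|x1]; first by rewrite psi1 phi1 mulr0.
have ratio_le : ((psi x / phi x)%:E <= Psistar psi phi)%E.
  by apply: ereal_sup_ubound; exists x; rewrite //= in_itv /= andbT.
by rewrite -ler_pdivrMr ?phi_gt0 // -lee_fin mu_attains.
Qed.

Let mphi : measurable_fun I phi.
Proof. exact: subspace_continuous_measurable_fun. Qed.

Let mpsi : measurable_fun I psi.
Proof. exact: subspace_continuous_measurable_fun. Qed.

Lemma Psi_le z : (Psi psi phi z <= (psi mu / phi mu * z)%:E)%E.
Proof.
apply: ge_ereal_sup => _ [F [_ int_phi_le ->]].
apply: le_trans (ge0_integral_le_linear_bound F _ mpsi mphi ratio_mu_ge0 _ _ _) _.
- exact: measurable_itv.
- by move=> x /I_ge1; exact: psi_ge0.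
- by move=> x /I_ge1; exact: phi_ge0.
- by move=> x /I_ge1; exact: psi_le_ratio_phi.
by rewrite [X in (_ <= X)%E]EFinM; apply: lee_wpmul2l; rewrite ?lee_fin ?ratio_mu_ge0.
Qed.

Variable z : R.
Hypothesis z_itv : 0 <= z <= phi mu.

Lemma eps_ge0 : 0 <= z / phi mu.
Proof. by case/andP: z_itv => z0 _; rewrite divr_ge0 // phi_ge0 // ltW. Qed.

Lemma eps_le1 : z / phi mu <= 1.
Proof. by case/andP: z_itv => _ zmu; rewrite ler_pdivrMr ?phi_gt0 // mul1r. Qed.

Definition extremal_weight : {i01 R} := Itv01 eps_ge0 eps_le1.

Local Notation extremal_mix := (dirac_mix extremal_weight (1 : R) mu).

Let I1 : I 1. Proof. by rewrite /= in_itv /= lexx. Qed.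
Let Imu : I mu. Proof. by rewrite /= in_itv /= ltW. Qed.

Lemma extremal_mix_in_calF : in_calF extremal_mix.
Proof. exact: dirac_mix_eq1. Qed.

Lemma integral_phi_extremal_mix :
  (\int[extremal_mix]_(x in I) (phi x)%:E = z%:E)%E.
Proof.
rewrite ge0_integral_dirac_mix //; last 2 first.
- exact/measurable_EFinP.
- by move=> x /I_ge1 x1; rewrite lee_fin phi_ge0.
by rewrite phi1 mule0 add0e -EFinM /= divfK // gt_eqF // phi_gt0.
Qed.

Lemma integral_psi_extremal_mix :
  (\int[extremal_mix]_(x in I) (psi x)%:E = (psi mu / phi mu * z)%:E)%E.
Proof.
rewrite ge0_integral_dirac_mix //; last 2 first.
- exact/measurable_EFinP.
- by move=> x /I_ge1 x1; rewrite lee_fin psi_ge0.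
by rewrite psi1 mule0 add0e -EFinM /=; congr EFin; rewrite [RHS]mulrC mulrAC mulrA.
Qed.

Lemma Psi_eq : Psi psi phi z = (psi mu / phi mu * z)%:E.
Proof.
apply/le_anti; rewrite Psi_le /=.
apply: ereal_sup_ubound; exists extremal_mix; split.
- exact: extremal_mix_in_calF.
- by rewrite integral_phi_extremal_mix.
- by rewrite integral_psi_extremal_mix.
Qed.

End Psi_linear.

Unset Implicit Arguments.
Theorem lemma3p1 (R : realType) (psi phi : R -> R)
  (psi_cont : {within `[1, +oo[, continuous psi})
  (phi_cont : {within `[1, +oo[, continuous phi})
  (psi_C2 : C2_open1 psi) (phi_C2 : C2_open1 phi)
  (phi_incr : {in `[1, +oo[ &, {homo phi : x y / x < y}})
  (phi1 : phi 1 = 0)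
  (psi_bnd : exists M : R, forall x, 1 <= x -> `|psi x| <= M)
  (psi1 : psi 1 = 0)
  (psi_ge0 : forall x, 1 <= x -> 0 <= psi x)
  (psi_neq0 : exists x, 1 <= x /\ psi x != 0)
  (lim_infty : (psi x / phi x) @[x --> +oo] --> (0 : R))
  (lim_1 : exists L : R, (psi x / phi x) @[x --> 1^'+] --> L /\
                         (L%:E < Psistar psi phi)%E)
  (mu : R) (mu_gt1 : 1 < mu)
  (mu_attains : (psi mu / phi mu)%:E = Psistar psi phi)
  (mu_max : forall m, 1 < m -> (psi m / phi m)%:E = Psistar psi phi -> m <= mu) :
  forall z : R, 0 <= z <= phi mu ->
    Psi psi phi z = (Psistar psi phi * z%:E)%E /\
    exists F : probability R R,
      [/\ forall A, measurable A ->
            F A = ((1 - z / phi mu)%:E * \d_(1%R : R) A + (z / phi mu)%:E * \d_mu A)%E,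
          in_calF F,
          (\int[F]_(x in `[1%R, +oo[%classic) (phi x)%:E <= z%:E)%E &
          (\int[F]_(x in `[1%R, +oo[%classic) (psi x)%:E = Psi psi phi z)%E].
Proof.
move=> z z_itv.
have PsiE := Psi_eq psi_cont phi_cont phi_incr phi1 psi1 psi_ge0 mu_gt1 mu_attains z_itv.
split; first by rewrite PsiE -mu_attains EFinM.
exists (dirac_mix (extremal_weight phi_incr phi1 mu_gt1 z_itv) (1 : R) mu); split.
- by [].
- exact: extremal_mix_in_calF.
- by rewrite integral_phi_extremal_mix.
- by rewrite integral_psi_extremal_mix // PsiE.
Qed.
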